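(* Let $S$ be a $1$-synchronizable system. Let $a_1,\dots,a_n,b_1,\dots,b_m\in\Sigma_M$ and $\tau\in T_0(S)$ be such that $\tau\cdot !a_1\cdots !a_n\in T_n(S)$, $\tau\cdot !b_1\cdots !b_m\in T_m(S)$, and $\mathrm{src}(a_i)\neq\mathrm{src}(b_j)$ for all $i\in\{1,\dots,n\}$, $j\in\{1,\dots,m\}$. Then for any two different shuffles $\xi_1,\xi_2$ of the action sequence $!?a_1\cdots !?a_n$ with the action sequence $!?b_1\cdots !?b_m$, it holds that $\tau\cdot\xi_1\in T_\omega(S)$, $\tau\cdot\xi_2\in T_\omega(S)$, and $\tau\cdot\xi_1\equiv_S\tau\cdot\xi_2$.
   Context: A message set $M=(\Sigma_M,N,\mathrm{src},\mathrm{dst})$: finite set of messages, $N\ge1$ peers, $\mathrm{src}(a)\neq\mathrm{dst}(a)\in\{1,\dots,N\}$. Actions $!a$ (by peer $\mathrm{src}(a)$), $?a$ (by peer $\mathrm{dst}(a)$); traces are finite action sequences; $!?a$ abbreviates $!a\cdot?a$. For a trace $\tau$, $\pi_!(\tau)$ is the sequence of sent messages; $\mathrm{buf}_{i\to j}(\tau)$ is the word $w$ (if any) with (sent on $i\to j$) $=$ (received on $i\to j$)$\cdot w$. $\tau$ is FIFO ($k$-bounded FIFO) if for all $i,j$ and prefixes $\tau'$, $\mathrm{buf}_{i\to j}(\tau')$ is defined (and has length $\le k$); synchronous if of the form $!?a_1\cdots!?a_k$. A system $S=(P_1,\dots,P_N)$: finite automata $P_i$ (all states accepting) over actions of peer $i$,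 with one FIFO channel per ordered pair $i\neq j$. A configuration: one control state per peer and contents $w_{i,j}$ of channels; stable if all channels empty. $!a$ ($\mathrm{src}(a)=i,\mathrm{dst}(a)=j$) moves $P_i$ and appends $a$ to $w_{i,j}$; $?a$ moves $P_j$ and removes $a$ from the head of $w_{i,j}$; $c_0$ is the initial configuration. $T_k(S)$ ($k\ge1$): $k$-bounded FIFO traces $\tau$ with $c_0\xrightarrow{\tau}c$ for some $c$; $T_0(S)$: synchronous such traces; $T_\omega(S)=\bigcup_kT_k(S)$. $\tau_1\equiv_S\tau_2$ iff $\tau_1,\tau_2\in T_\omega(S)$ and there is $c$ with $c_0\xrightarrow{\tau_1}c$ and $c_0\xrightarrow{\tau_2}c$. $ST_k(S)=\{\pi_!(\tau)\mid\tau\in T_k(S)\}\cup\{(\pi_!(\tau),c)\mid c_0\xrightarrow{\tau}c,\ c\text{ stable},\ \tau\in T_k(S)\}$; $S$ is $1$-synchronizable if $ST_0(S)=ST_1(S)$. *)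

From mathcomp Require Import all_boot.
Set Implicit Arguments. Unset Strict Implicit. Unset Printing Implicit Defensive.

(* Message set M = (Sigma_M, N, src, dst); peers {1..N} are represented by 'I_N. *)
Record MsgSet := {
  msg : finType;
  npeers : nat;
  src : msg -> 'I_npeers;
  dst : msg -> 'I_npeers;
  npeers_pos : 0 < npeers;
  src_neq_dst : forall a, src a != dst a }.

Inductive action (M : MsgSet) := Send of msg M | Recv of msg M.
Arguments Send {M}. Arguments Recv {M}.

Definition peer_of (M : MsgSet) (x : action M) : 'I_(npeers M) :=
  match x with Send a => src a | Recv a => dst a end.

(* A system: one finite automaton per peer (all states accepting), over the
   actions of that peer. *)
Unset Implicit Arguments.
Record system (M : MsgSet) := {
  state : 'I_(npeers M) -> finType;
  init : forall i, state i;
  delta : forall i, state i -> action M -> state i -> bool;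
  delta_peer : forall i q x q', delta i q x q' -> peer_of x = i }.
Set Implicit Arguments.
Arguments init {M} s i.
Arguments delta {M} s {i}.
Arguments state {M} s i.

Record config (M : MsgSet) (S : system M) := {
  cst : forall i, state S i;
  chan : 'I_(npeers M) -> 'I_(npeers M) -> seq (msg M) }.

Definition c0 (M : MsgSet) (S : system M) : config S :=
  {| cst := init S; chan := fun _ _ => [::] |}.

Definition stable (M : MsgSet) (S : system M) (c : config S) : Prop :=
  forall i j, chan c i j = [::].

Definition step (M : MsgSet) (S : system M) (c : config S) (x : action M)
    (c' : config S) : Prop :=
  match x with
  | Send a =>
      delta S (cst c (src a)) (Send a) (cst c' (src a)) /\
      (forall k, k != src a -> cst c' k = cst c k) /\
      chan c' (src a) (dst a) = rcons (chan c (src a) (dst a)) a /\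
      (forall i j, (i, j) != (src a, dst a) -> chan c' i j = chan c i j)
  | Recv a =>
      delta S (cst c (dst a)) (Recv a) (cst c' (dst a)) /\
      (forall k, k != dst a -> cst c' k = cst c k) /\
      chan c (src a) (dst a) = a :: chan c' (src a) (dst a) /\
      (forall i j, (i, j) != (src a, dst a) -> chan c' i j = chan c i j)
  end.

Inductive reach (M : MsgSet) (S : system M) :
    config S -> seq (action M) -> config S -> Prop :=
  | reach_nil c : reach c [::] c
  | reach_cons c x c' t c'' : step c x c' -> reach c' t c'' -> reach c (x :: t) c''.

Definition sends (M : MsgSet) (t : seq (action M)) : seq (msg M) :=
  pmap (fun x => if x is Send a then Some a else None) t.
Definition recvs (M : MsgSet) (t : seq (action M)) : seq (msg M) :=
  pmap (fun x => if x is Recv a then Some a else None) t.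

Definition sent_on (M : MsgSet) (i j : 'I_(npeers M)) (t : seq (action M)) :=
  [seq a <- sends t | (src a == i) && (dst a == j)].
Definition recv_on (M : MsgSet) (i j : 'I_(npeers M)) (t : seq (action M)) :=
  [seq a <- recvs t | (src a == i) && (dst a == j)].

Definition buf_defined (M : MsgSet) (i j : 'I_(npeers M)) (t : seq (action M)) :=
  prefix (recv_on i j t) (sent_on i j t).
Definition buf_size (M : MsgSet) (i j : 'I_(npeers M)) (t : seq (action M)) :=
  size (sent_on i j t) - size (recv_on i j t).

Definition kfifo (M : MsgSet) (k : nat) (t : seq (action M)) : Prop :=
  forall n i j, buf_defined i j (take n t) /\ buf_size i j (take n t) <= k.

Definition sync_seq (M : MsgSet) (s : seq (msg M)) : seq (action M) :=
  flatten [seq [:: Send a; Recv a] | a <- s].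
Definition synchronous (M : MsgSet) (t : seq (action M)) : Prop :=
  exists s, t = sync_seq s.

Definition T (M : MsgSet) (S : system M) (k : nat) (t : seq (action M)) : Prop :=
  (if k is 0 then synchronous t else kfifo k t) /\ exists c, reach (c0 S) t c.
Definition Tomega (M : MsgSet) (S : system M) (t : seq (action M)) : Prop :=
  exists k, T S k t.

Definition equivS (M : MsgSet) (S : system M) (t1 t2 : seq (action M)) : Prop :=
  Tomega S t1 /\ Tomega S t2 /\
  exists c, reach (c0 S) t1 c /\ reach (c0 S) t2 c.

(* ST_k(S), a set of words and of (word, stable configuration) pairs *)
Definition ST (M : MsgSet) (S : system M) (k : nat)
    (x : seq (msg M) + (seq (msg M) * config S)) : Prop :=
  match x with
  | inl w => exists t, T S k t /\ sends t = w
  | inr (w, c) => exists t, T S k t /\ sends t = w /\ reach (c0 S) t c /\ stable c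
  end.

Arguments ST {M} S k x.

Definition one_synchronizable (M : MsgSet) (S : system M) : Prop :=
  forall x, ST S 0 x <-> ST S 1 x.

Inductive shuffle (A : Type) : seq A -> seq A -> seq A -> Prop :=
  | shuffle_nil : shuffle [::] [::] [::]
  | shuffle_l x u v w : shuffle u v w -> shuffle (x :: u) v (x :: w)
  | shuffle_r x u v w : shuffle u v w -> shuffle u (x :: v) (x :: w).

From mathcomp Require Import all_boot.
From Stdlib Require Import FunctionalExtensionality.
Set Implicit Arguments. Unset Strict Implicit. Unset Printing Implicit Defensive.

(* A trace is executable iff every peer's projection is a run of its automaton
   and every channel word behaves as a FIFO queue; the latter is automatic when
   each channel word is synchronous up to one pending send, and such a trace is
   1-bounded.  1-synchronizability then yields a synchronous trace with the
   same sends whose projections are runs, reaching the same configuration when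
   the channels end empty.
   The first use shows, by induction on the sends, that after tau every shuffle
   of a and b executes synchronously: the receiver of the first message can
   receive it before its own later sends.  The second use, on the window !x !y ?y ?x, shows that
   exchanging adjacent exchanges x, y with different senders does not change
   the final state of any peer other than src x.  Each peer sends in at most
   one of a and b, so bubble-sorting the other sequence to the front shows that
   all shuffles drive every peer to the same state with empty channels. *)

Section Shuffles.
Variable T : Type.
Implicit Types u v w : seq T.

Lemma shuffle_sym u v w : shuffle u v w -> shuffle v u w.
Proof. by elim=> *; constructor. Qed.

Lemma shuffle_cat u v : shuffle u v (u ++ v).
Proof. by elim: u => [|x u IH] /=; [elim: v => *; constructor | constructor]. Qed.

Lemma shuffle_nil_r u w : shuffle u [::] w -> w = u.
Proof. by move e : [::] => v sh; elim: sh e => //= x u' v' w' _ IH /IH ->. Qed.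

Lemma shuffle_filter (p : pred T) u v w :
  shuffle u v w -> shuffle (filter p u) (filter p v) (filter p w).
Proof. by elim=> [|x|x] * /=; try case: (p x); do ?constructor. Qed.

Lemma shuffle_pmap (T' : Type) (f : T -> option T') u v w :
  shuffle u v w -> shuffle (pmap f u) (pmap f v) (pmap f w).
Proof. by elim=> [|x|x] * /=; try case: (f x) => /= *; do ?constructor. Qed.

Lemma filter_take (p : pred T) n (s : seq T) :
  exists m, filter p (take n s) = take m (filter p s).
Proof.
elim: s n => [|x s IH] [|n]; try by exists 0; rewrite ?take0.
by have [m e] := IH n; rewrite /= e; case: (p x); [exists m.+1 | exists m].
Qed.

End Shuffles.

Section ShuffleSort.
Variables (T : eqType) (U V : seq T) (R : seq T -> seq T -> Prop).
Hypothesis R_refl : forall w, R w w.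
Hypothesis R_trans : forall w1 w2 w3, R w1 w2 -> R w2 w3 -> R w1 w3.
Hypothesis R_swap : forall P Q x y, x \in U -> y \in V ->
  shuffle U V (P ++ y :: x :: Q) -> shuffle U V (P ++ x :: y :: Q) ->
  R (P ++ y :: x :: Q) (P ++ x :: y :: Q).

Lemma R_move_left x u v P : x \in U -> {subset v <= V} ->
  (forall w, shuffle (x :: u) v w -> shuffle U V (P ++ w)) ->
  R (P ++ v ++ x :: u) (P ++ x :: v ++ u).
Proof.
elim: v P => [|y v IH] P xU vV shP /=; first exact: R_refl.
have yV : y \in V by apply: vV; rewrite mem_head.
apply: (R_trans (w2 := P ++ y :: x :: v ++ u)).
  have := IH (P ++ [:: y]); rewrite -!catA; apply=> // [z zv|w sw].
    by apply: vV; rewrite inE zv orbT.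
  by rewrite -catA; apply: shP; constructor.
apply: R_swap => //; apply: shP; do 2 constructor; exact/shuffle_sym/shuffle_cat.
Qed.

Lemma R_shuffle_sort_from u v w P :
  shuffle u v w -> {subset u <= U} -> {subset v <= V} ->
  (forall w', shuffle u v w' -> shuffle U V (P ++ w')) -> R (P ++ v ++ u) (P ++ w).
Proof.
move=> sh; elim: sh P => {u v w} [|x u v w _ IH|y u v w _ IH] P uU vV shP;
  first exact: R_refl.
- have xU : x \in U by apply: uU; rewrite mem_head.
  apply: (R_trans (R_move_left xU vV shP)).
  have := IH (P ++ [:: x]); rewrite -!catA; apply=> // [z zu|w' sw].
    by apply: uU; rewrite inE zu orbT.
  by rewrite -catA; apply: shP; constructor.
- have := IH (P ++ [:: y]); rewrite -!catA; apply=> // [z zv|w' sw].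
    by apply: vV; rewrite inE zv orbT.
  by rewrite -catA; apply: shP; constructor.
Qed.

Lemma R_shuffle_sort w : shuffle U V w -> R (V ++ U) w.
Proof. by move=> sh; apply: (R_shuffle_sort_from (P := [::]) sh). Qed.

End ShuffleSort.

Section Executions.
Variables (M : MsgSet) (S : system M).
Local Notation peer := ('I_(npeers M)).
Local Notation act := (action M).

Inductive lrun (i : peer) : state S i -> seq act -> state S i -> Prop :=
  | lrun_nil q : lrun q [::] q
  | lrun_cons q x q1 w q' : delta S q x q1 -> lrun q1 w q' -> lrun q (x :: w) q'.

Definition accepts (i : peer) (w : seq act) := exists q, lrun (init S i) w q.

Lemma lrun_nilE i q q' : lrun (i := i) q [::] q' -> q = q'.
Proof. by move=> r; inversion r. Qed.

Lemma lrun_consE i q x w q' :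
  lrun (i := i) q (x :: w) q' -> exists2 q1, delta S q x q1 & lrun q1 w q'.
Proof. by move=> r; inversion_clear r as [|? ? q1 ? ? d r']; exists q1. Qed.

Lemma lrun_catl i q u v q' : lrun (i := i) q (u ++ v) q' -> exists qm, lrun q u qm.
Proof.
elim: u q => [|x u IH] q; first by exists q; exact: lrun_nil.
by case/lrun_consE => q1 d /IH [qm r]; exists qm; exact: lrun_cons d r.
Qed.

Lemma accepts_catl i u v : accepts i (u ++ v) -> accepts i u.
Proof. by case=> q /lrun_catl [qm r]; exists qm. Qed.

Definition proj (i : peer) (t : seq act) := [seq x <- t | peer_of x == i].

Lemma proj_cat i t1 t2 : proj i (t1 ++ t2) = proj i t1 ++ proj i t2.
Proof. exact: filter_cat. Qed.

Lemma proj_other i x t : peer_of x != i -> proj i (x :: t) = proj i t.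
Proof. by rewrite /proj /= => /negbTE ->. Qed.

Lemma proj_own i x t : peer_of x = i -> proj i (x :: t) = x :: proj i t.
Proof. by rewrite /proj /= => ->; rewrite eqxx. Qed.

Lemma proj_drop j (u v : seq act) y :
  peer_of y != j -> proj j (u ++ y :: v) = proj j (u ++ v).
Proof. by move=> yj; rewrite !proj_cat proj_other. Qed.

Definition feasible (t : seq act) := forall j, accepts j (proj j t).

Lemma reach_lrun (c : config S) t c' :
  reach c t c' -> forall j, lrun (cst c j) (proj j t) (cst c' j).
Proof.
elim=> {c t c'} [c|c x c1 t c2 st _ IH] j; first exact: lrun_nil.
case: (eqVneq (peer_of x) j) => [<-|ne]; last first.
  rewrite proj_other //; suff <- : cst c1 j = cst c j by [].
  by case: x st ne => a [_ [fix_others _]] ne; rewrite fix_others // eq_sym.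
rewrite /proj /= eqxx; apply: lrun_cons (IH _).
by case: x st => a [].
Qed.

Lemma feasible_reach t c : reach (c0 S) t c -> feasible t.
Proof. by move=> r j; exists (cst c j); exact: reach_lrun r j. Qed.

Definition on_chan (i j : peer) (m : msg M) := (src m == i) && (dst m == j).
Definition act_on (i j : peer) (x : act) :=
  match x with Send m | Recv m => on_chan i j m end.
Definition chan_word (i j : peer) (t : seq act) := [seq x <- t | act_on i j x].

Lemma chan_word_cat i j t1 t2 :
  chan_word i j (t1 ++ t2) = chan_word i j t1 ++ chan_word i j t2.
Proof. exact: filter_cat. Qed.

Fixpoint queue_run (q : seq (msg M)) (w : seq act) : option (seq (msg M)) :=
  match w with
  | [::] => Some q
  | Send a :: w' => queue_run (rcons q a) w'
  | Recv a :: w' => if q is b :: q' then if b == a then queue_run q' w' else None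
                    else None
  end.

Definition upd (f : forall j, state S j) (p : peer) (v : state S p) j : state S j :=
  match p =P j with
  | ReflectT e => eq_rect p (fun k => state S k : Type) v j e
  | ReflectF _ => f j
  end.

Arguments upd f p v j : clear implicits.

Lemma upd_same f p v : upd f p v p = v.
Proof. by rewrite /upd; case: eqP => // e; rewrite (eq_irrelevance e erefl). Qed.

Lemma upd_other f p v j : p != j -> upd f p v j = f j.
Proof. by rewrite /upd; case: eqP. Qed.

Definition next_chan (c : config S) (x : act) i j :=
  if act_on i j x then
    if x is Send a then rcons (chan c i j) a else behead (chan c i j)
  else chan c i j.

Lemma step_next (c : config S) x (q1 : state S (peer_of x)) :
  delta S (cst c (peer_of x)) x q1 ->
  (forall a, x = Recv a ->
     chan c (src a) (dst a) = a :: behead (chan c (src a) (dst a))) ->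
  step c x {| cst := upd (cst c) (peer_of x) q1; chan := next_chan c x |}.
Proof.
case: x q1 => a q1 d /(_ a) hd /=; (split; first by rewrite upd_same);
  (split; first by move=> k nk; rewrite upd_other // eq_sym);
  rewrite /next_chan /= /on_chan !eqxx; (split; first by [] || exact: hd);
  by move=> i j nij; case: ifP => // /andP [/eqP ei /eqP ej]; rewrite ei ej eqxx in nij.
Qed.

Lemma lrun_reach t (c : config S) f chf :
  (forall j, lrun (cst c j) (proj j t) (f j)) ->
  (forall i j, queue_run (chan c i j) (chan_word i j t) = Some (chf i j)) ->
  reach c t {| cst := f; chan := chf |}.
Proof.
elim: t c => [|x t IH] c runs queues.
  suff -> : c = {| cst := f; chan := chf |} by exact: reach_nil.
  case: c runs queues => cs ch /= runs queues; congr Build_config.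
    by apply: functional_extensionality_dep => j; exact: lrun_nilE (runs j).
  by apply: functional_extensionality => i; apply: functional_extensionality => j;
     case: (queues i j).
have := runs (peer_of x); rewrite /proj /= eqxx => /lrun_consE [q1 d r].
have hd a :
    x = Recv a -> chan c (src a) (dst a) = a :: behead (chan c (src a) (dst a)).
  move=> ex; move: (queues (src a) (dst a)); rewrite ex.
  rewrite /chan_word /= /on_chan !eqxx /=.
  by case: (chan c _ _) => //= b q; case: eqP => // ->.
apply: (reach_cons (step_next d hd)); apply: IH => [j|i j] /=.
  case: (eqVneq (peer_of x) j) => [<-|ne]; first by rewrite upd_same.
  by rewrite upd_other //; move: (runs j); rewrite proj_other.
move: (queues i j); rewrite /next_chan /chan_word /=.
case: ifP => // _; case: x {runs queues d r hd q1} => a //=.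
by case: (chan c i j) => //= b q; case: eqP.
Qed.

Lemma sync_seq_cons (x : msg M) s :
  sync_seq (x :: s) = Send x :: Recv x :: sync_seq s.
Proof. by []. Qed.

Lemma sync_seq_cat (s1 s2 : seq (msg M)) :
  sync_seq (s1 ++ s2) = sync_seq s1 ++ sync_seq s2.
Proof. by rewrite /sync_seq map_cat flatten_cat. Qed.

Lemma sends_cat (t1 t2 : seq act) : sends (t1 ++ t2) = sends t1 ++ sends t2.
Proof. exact: pmap_cat. Qed.

Lemma recvs_cat (t1 t2 : seq act) : recvs (t1 ++ t2) = recvs t1 ++ recvs t2.
Proof. exact: pmap_cat. Qed.

Lemma sends_sync (s : seq (msg M)) : sends (sync_seq s) = s.
Proof. by elim: s => //= x s; rewrite /sends => ->. Qed.

Lemma recvs_sync (s : seq (msg M)) : recvs (sync_seq s) = s.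
Proof. by elim: s => //= x s; rewrite /recvs => ->. Qed.

Lemma chan_word_sync i j (s : seq (msg M)) :
  chan_word i j (sync_seq s) = sync_seq [seq m <- s | on_chan i j m].
Proof.
elim: s => //= x s IH; rewrite /chan_word /= -/(chan_word i j _) IH.
by case: (on_chan i j x).
Qed.

Definition almost_sync (w : seq act) :=
  synchronous w \/ exists s x, w = sync_seq s ++ [:: Send x].

Lemma almost_sync_take_sync (s : seq (msg M)) n : almost_sync (take n (sync_seq s)).
Proof.
elim: s n => [|x s IH] [|[|n]] /=; try by left; exists [::].
  by right; exists [::], x.
case: (IH n) => [[s' ->]|[s' [y ->]]]; first by left; exists (x :: s').
by right; exists (x :: s'), y.
Qed.

Lemma almost_sync_take n w : almost_sync w -> almost_sync (take n w).
Proof.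
case=> [[s ->]|[s [x ->]]]; first exact: almost_sync_take_sync.
rewrite take_cat; case: ifP => _; first exact: almost_sync_take_sync.
case: (_ - _) => [|k] /=; last by right; exists s, x.
by left; exists s; rewrite cats0.
Qed.

Lemma sends_filter (p : pred act) (q : pred (msg M)) t :
  (forall a, p (Send a) = q a) -> sends (filter p t) = filter q (sends t).
Proof.
move=> pq; elim: t => // [[a|a] t IH]; rewrite /sends /= in IH *.
  by rewrite pq; case: (q a); rewrite /= IH.
by case: (p _); rewrite /= IH.
Qed.

Lemma recvs_filter (p : pred act) (q : pred (msg M)) t :
  (forall a, p (Recv a) = q a) -> recvs (filter p t) = filter q (recvs t).
Proof.
move=> pq; elim: t => // [[a|a] t IH]; rewrite /recvs /= in IH *.
  by case: (p _); rewrite /= IH.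
by rewrite pq; case: (q a); rewrite /= IH.
Qed.

Lemma kfifo1_almost_sync (t : seq act) :
  (forall i j, almost_sync (chan_word i j t)) -> kfifo 1 t.
Proof.
move=> chans n i j; rewrite /buf_defined /buf_size /sent_on /recv_on.
rewrite -(sends_filter (p := act_on i j)) // -(recvs_filter (p := act_on i j)) //.
have [m ->] := filter_take (act_on i j) n t.
case: (almost_sync_take m (chans i j)) => [[s ->]|[s [x ->]]].
  by rewrite sends_sync recvs_sync prefix_refl subnn.
rewrite sends_cat recvs_cat sends_sync recvs_sync cats0.
by rewrite prefix_prefix size_cat addKn.
Qed.

Lemma queue_run_cat q (w1 w2 : seq act) :
  queue_run q (w1 ++ w2) = if queue_run q w1 is Some q' then queue_run q' w2 else None.
Proof. by elim: w1 q => [|[a|a] w1 IH] [|b q] //=; case: eqP. Qed.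

Lemma queue_run_sync (s : seq (msg M)) : queue_run [::] (sync_seq s) = Some [::].
Proof. by elim: s => //= x s; rewrite eqxx. Qed.

Lemma queue_run_almost_sync (w : seq act) :
  almost_sync w -> exists q, queue_run [::] w = Some q.
Proof.
case=> [[s ->]|[s [x ->]]]; first by exists [::]; exact: queue_run_sync.
by rewrite queue_run_cat queue_run_sync; exists [:: x].
Qed.

Definition stable_config (f : forall j, state S j) : config S :=
  {| cst := f; chan := fun _ _ => [::] |}.

Lemma T1_feasible (t : seq act) :
  (forall i j, almost_sync (chan_word i j t)) -> feasible t -> T S 1 t.
Proof.
move=> chans /fin_all_exists [f runs]; split; first exact: kfifo1_almost_sync.
exists {| cst := f; chan := fun i j => odflt [::] (queue_run [::] (chan_word i j t)) |}.
apply: lrun_reach => // i j.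
by have [q e] := queue_run_almost_sync (chans i j); rewrite e.
Qed.

Lemma T1_reach_stable (t : seq act) f :
  (forall i j, synchronous (chan_word i j t)) ->
  (forall j, lrun (init S j) (proj j t) (f j)) ->
  T S 1 t /\ reach (c0 S) t (stable_config f).
Proof.
move=> chans runs; have reach_f : reach (c0 S) t (stable_config f).
  by apply: lrun_reach => // i j; have [s ->] := chans i j; exact: queue_run_sync.
split=> //; split; last by exists (stable_config f).
by apply: kfifo1_almost_sync => i j; left.
Qed.

Definition sent_by (j : peer) (s : seq (msg M)) := [seq m <- s | src m == j].

Lemma proj_map_Send j (s : seq (msg M)) :
  proj j (map Send s) = map Send (sent_by j s).
Proof. exact: filter_map. Qed.

Lemma proj_sync_sent_by j (s : seq (msg M)) :
  all (fun m => src m == j) s -> proj j (sync_seq s) = map Send s.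
Proof.
elim: s => //= x s IH /andP [/eqP sx /IH]; rewrite /proj /= sx eqxx.
by rewrite -sx eq_sym (negbTE (src_neq_dst x)) => ->.
Qed.

Lemma sent_by_nilP j (s : seq (msg M)) :
  reflect {in s, forall m, src m != j} (sent_by j s == [::]).
Proof. by rewrite -[_ == _]negbK -has_filter; exact: hasPn. Qed.

Lemma on_chan_sent_by i k (s : seq (msg M)) :
  [seq m <- s | on_chan i k m] = [seq m <- sent_by i s | dst m == k].
Proof. by rewrite -filter_predI; apply: eq_filter => m; rewrite /on_chan /= andbC. Qed.

Lemma filter_from_other (p : pred (msg M)) i q (s : seq (msg M)) :
  (forall m, p m -> src m = i) -> i != q ->
  all (fun m => src m == q) s -> filter p s = [::].
Proof.
move=> p_i iq /allP from_q; rewrite -(filter_pred0 s); apply: eq_in_filter => m /from_q.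
by apply: contraTF => /p_i ->.
Qed.

Lemma prefix_sent_by_cons k x (s s' : seq (msg M)) :
  prefix (sent_by k s') (sent_by k s) -> prefix (sent_by k (x :: s')) (sent_by k (x :: s)).
Proof. by rewrite /sent_by /=; case: ifP; rewrite // prefix_cons eqxx. Qed.

Lemma almost_sync_pending (s : seq (msg M)) y (b : bool) :
  almost_sync (sync_seq s ++ if b then [:: Send y] else [::]).
Proof. by case: b; [right; exists s, y | left; exists s; rewrite cats0]. Qed.

Definition peer_step (j : peer) (x : act) : option (msg M) :=
  match x with
  | Send m => if dst m == j then None else Some m
  | Recv m => if dst m == j then Some m else None
  end.

Definition peer_order (j : peer) (t : seq act) := pmap (peer_step j) t.

Lemma peer_order_sync j (s : seq (msg M)) : peer_order j (sync_seq s) = s.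
Proof.
elim: s => //= x s IH; rewrite /peer_order /=.
by case: ifP => /=; rewrite -/(peer_order j _) IH.
Qed.

Lemma proj_sync_peer_order j (t : seq act) :
  proj j (sync_seq (peer_order j t)) = proj j t.
Proof.
elim: t => // x t IH; rewrite -cat1s /peer_order pmap_cat sync_seq_cat !proj_cat.
rewrite -/(peer_order j t) IH.
case: x => m; have := src_neq_dst m; rewrite /proj /=;
by case: (eqVneq (dst m) j) => [<-|/negbTE nj] /negbTE sd; rewrite /= ?sd ?nj ?eqxx //;
  case: (src m == j).
Qed.

Lemma proj_window j (x y : msg M) : src x != src y ->
  proj j [:: Send x; Send y; Recv y; Recv x] =
  proj j (sync_seq (if src x == j then [:: x; y] else [:: y; x])).
Proof.
move=> sxy; have nx := src_neq_dst x; have ny := src_neq_dst y; rewrite /proj /=.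
case: (eqVneq (src x) j) => ex; case: (eqVneq (src y) j) => ey;
case: (eqVneq (dst x) j) => dx; case: (eqVneq (dst y) j) => dy;
by do 3!rewrite ?ex ?ey ?dx ?dy ?eqxx ?(negbTE ex) ?(negbTE ey) ?(negbTE dx) ?(negbTE dy) /=
  in sxy nx ny *.
Qed.

Lemma chan_word_window i k (x y : msg M) : src x != src y ->
  chan_word i k [:: Send x; Send y; Recv y; Recv x] =
  sync_seq [seq m <- [:: x; y] | on_chan i k m].
Proof.
move=> sxy; rewrite /chan_word /= /on_chan.
case: (eqVneq (src x) i) => [<-|_]; case: (eqVneq (src y) _) => [syx|_] //=;
  by [rewrite syx eqxx in sxy | case: (dst _ == k)].
Qed.

End Executions.

Arguments upd {M S} f p v j.

Section OneSynchronizable.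
Variables (M : MsgSet) (S : system M).
Local Notation act := (action M).
Hypothesis sync1 : one_synchronizable S.

Lemma feasible_sync_sends (t : seq act) :
  (forall i j, almost_sync (chan_word i j t)) -> feasible S t ->
  feasible S (sync_seq (sends t)).
Proof.
move=> chans feas.
have : ST S 1 (inl (sends t)) by exists t; split=> //; exact: T1_feasible.
by case/(sync1 _).2 => _ [[[s ->] [c r]] <-]; rewrite sends_sync; exact: feasible_reach r.
Qed.

Lemma lrun_sync_sends (t : seq act) f :
  (forall i j, synchronous (chan_word i j t)) ->
  (forall j, lrun (init S j) (proj j t) (f j)) ->
  forall j, lrun (init S j) (proj j (sync_seq (sends t))) (f j).
Proof.
move=> chans runs; have [T1t reach_f] := T1_reach_stable chans runs.
have : ST S 1 (inr (sends t, stable_config f)) by exists t.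
by case/(sync1 _).2 => _ [[[s ->] _] [<- [r _]]]; rewrite sends_sync; exact: reach_lrun r.
Qed.

Lemma feasible_sync_rcons s0 x :
  feasible S (sync_seq s0 ++ [:: Send x]) -> feasible S (sync_seq (rcons s0 x)).
Proof.
move=> feas; rewrite -cats1; have := feasible_sync_sends _ feas.
rewrite sends_cat sends_sync; apply=> i j.
by rewrite chan_word_cat chan_word_sync; exact: almost_sync_pending.
Qed.

(* Witness: the 1-bounded trace that leaves !x pending while q performs its
   sends R synchronously and then !sr; its synchronous reordering has q
   receive x first. *)
Lemma feasible_sync_recv_sends s0 x R sr :
  all (fun m => src m == dst x) (rcons R sr) ->
  feasible S (sync_seq (s0 ++ x :: R)) ->
  accepts S (dst x) (proj (dst x) (sync_seq s0) ++ map Send (rcons R sr)) ->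
  feasible S (sync_seq (s0 ++ x :: rcons R sr)).
Proof.
set q := dst x => from_q feasR accq; have pq : src x != q := src_neq_dst x.
move: from_q; rewrite all_rcons => /andP [/eqP srq Rq].
pose t := sync_seq s0 ++ Send x :: sync_seq R ++ [:: Send sr].
have -> : s0 ++ x :: rcons R sr = sends t.
  by rewrite /t sends_cat /= sends_cat !sends_sync cats1.
apply: feasible_sync_sends => // [i k|k].
  rewrite /t -cat1s !chan_word_cat !chan_word_sync /chan_word /=.
  have [/andP [/eqP <- _]|_] := boolP (on_chan i k x).
    rewrite (filter_from_other _ pq Rq) => [|m /andP [/eqP] //].
    rewrite /on_chan srq eq_sym (negbTE pq) /=.
    by right; exists [seq m <- s0 | on_chan (src x) k m], x.
  by rewrite /= catA -sync_seq_cat; exact: almost_sync_pending.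
have [->|kq] := eqVneq k q.
  move: accq; rewrite /t !proj_cat proj_other // proj_cat (proj_sync_sent_by Rq).
  by rewrite map_rcons -cats1 /proj /= srq eqxx.
move: (feasR k); rewrite /t sync_seq_cat sync_seq_cons !proj_cat.
rewrite -(cat1s (Send x)) -(cat1s (Recv x)) -(cat1s (Send x) (_ ++ _)) !proj_cat.
rewrite (@proj_other _ k (Recv x) [::]) 1?eq_sym //.
by rewrite (@proj_other _ k (Send sr)) /= ?srq 1?eq_sym // cats0.
Qed.

Lemma feasible_sends_prefix s0 (s s' : seq (msg M)) :
  (forall k, prefix (sent_by k s') (sent_by k s)) ->
  feasible S (sync_seq s0 ++ map Send s) -> feasible S (sync_seq s0 ++ map Send s').
Proof.
move=> pre feas k; move: (feas k); rewrite !proj_cat !proj_map_Send.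
by case/prefixP: (pre k) => w ->; rewrite map_cat catA; exact: accepts_catl.
Qed.

(* The receiver q of the first message x must receive it before its own sends
   in sg; the last of these sends is split off so that the induction hypothesis
   applies to x followed by the others. *)
Lemma feasible_sync_cat s0 sg :
  feasible S (sync_seq s0 ++ map Send sg) -> feasible S (sync_seq (s0 ++ sg)).
Proof.
move: {2}(size sg) (leqnn (size sg)) => n.
elim: n sg s0 => [|n IH] [|x sg] s0 // sz feas; try by move: feas; rewrite !cats0.
have {}sz : size sg <= n := sz.
set q := dst x; have pq : src x != q := src_neq_dst x.
have sent_q : sent_by q (x :: sg) = sent_by q sg by rewrite /sent_by /= (negbTE pq).
have sync_x : feasible S (sync_seq (s0 ++ x :: sent_by q sg)).
  case/lastP E : (sent_by q sg) => [|R sr].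
    rewrite cats1; apply: feasible_sync_rcons.
    apply: (feasible_sends_prefix (s' := [:: x]) _ feas) => k.
    by apply: prefix_sent_by_cons; rewrite prefix0s.
  have from_q : all (fun m => src m == q) (rcons R sr) by rewrite -E filter_all.
  apply: feasible_sync_recv_sends => //.
    apply: IH.
      by rewrite /= -(size_rcons R sr) -E size_filter (leq_trans (count_size _ _) sz).
    apply: (feasible_sends_prefix _ feas) => k; apply: prefix_sent_by_cons.
    have [->|kq] := eqVneq k q.
      rewrite E /sent_by; move: from_q; rewrite all_rcons => /andP [_ /all_filterP ->].
      exact: prefix_rcons.
    rewrite /sent_by (filter_from_other _ kq) ?prefix0s // => [m /eqP //|].
    by move: from_q; rewrite all_rcons => /andP [].
  by move: (feas q); rewrite proj_cat proj_map_Send sent_q E.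
rewrite -cat_rcons; apply: IH => // k.
have -> : sync_seq (rcons s0 x) ++ map Send sg =
          (sync_seq s0 ++ [:: Send x]) ++ Recv x :: map Send sg.
  by rewrite -cats1 sync_seq_cat -!catA.
have [->|kq] := eqVneq k q; last by rewrite proj_drop 1?eq_sym // -catA; exact: feas k.
move: (sync_x q); rewrite sync_seq_cat sync_seq_cons !proj_cat.
rewrite !(@proj_other _ q (Send x)) //.
by rewrite !proj_own // (proj_sync_sent_by (filter_all _ _)) proj_map_Send cats0.
Qed.

(* In the window !x !y ?y ?x, which ends with empty channels, every peer other
   than src x sees y before x. *)
Lemma lrun_sync_swap i u v (x y : msg M) : src x != src y -> src x != i ->
  feasible S (sync_seq (u ++ x :: y :: v)) -> feasible S (sync_seq (u ++ y :: x :: v)) ->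
  forall q, lrun (init S i) (proj i (sync_seq (u ++ y :: x :: v))) q ->
            lrun (init S i) (proj i (sync_seq (u ++ x :: y :: v))) q.
Proof.
move=> sxy sxi feas_xy feas_yx q run_i.
pose t := sync_seq u ++ [:: Send x; Send y; Recv y; Recv x] ++ sync_seq v.
have proj_t j :
    proj j t = proj j (sync_seq (u ++ (if src x == j then [:: x; y] else [:: y; x]) ++ v)).
  by rewrite /t !sync_seq_cat !proj_cat proj_window.
have /fin_all_exists [f runs] j : exists r, lrun (init S j) (proj j t) r.
  by rewrite proj_t; case: ifP => _; [case: (feas_xy j) | case: (feas_yx j)] => r; exists r.
have := lrun_sync_sends (t := t) (f := upd f i q) _ _ i.
rewrite upd_same /t !sends_cat !sends_sync; apply=> [i' k|j].
  rewrite !chan_word_cat !chan_word_window // !chan_word_sync -!sync_seq_cat.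
  by eexists.
have [<-|ij] := eqVneq i j; first by rewrite upd_same proj_t (negbTE sxi).
by rewrite upd_other.
Qed.

Lemma lrun_shuffle_sort s0 (U V : seq (msg M)) j :
  (forall x y, x \in U -> y \in V -> src x != src y) -> sent_by j U = [::] ->
  (forall w, shuffle U V w -> feasible S (sync_seq (s0 ++ w))) ->
  forall w q, shuffle U V w ->
  lrun (init S j) (proj j (sync_seq (s0 ++ V ++ U))) q ->
  lrun (init S j) (proj j (sync_seq (s0 ++ w))) q.
Proof.
move=> disj /eqP /sent_by_nilP silent feas w q sh.
apply: (R_shuffle_sort (R := fun w1 w2 => forall q,
  lrun (init S j) (proj j (sync_seq (s0 ++ w1))) q ->
  lrun (init S j) (proj j (sync_seq (s0 ++ w2))) q)) sh q => //.
- by move=> w1 w2 w3 h12 h23 r /h12 /h23.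
- move=> P Q x y xU yV sh_yx sh_xy; rewrite !catA.
  by apply: lrun_sync_swap; rewrite ?disj ?silent // -catA; exact: feas.
Qed.

Variables (a b s0 : seq (msg M)).
Hypothesis disj : forall x y, x \in a -> y \in b -> src x != src y.

Lemma sent_by_side j : sent_by j a = [::] \/ sent_by j b = [::].
Proof.
have [/hasP [x xa /eqP <-]|/hasPn silent_a] := boolP (has (fun m => src m == j) a).
  by right; apply/eqP/sent_by_nilP => y yb; rewrite eq_sym disj.
by left; apply/eqP/sent_by_nilP.
Qed.

Lemma feasible_sync_shuffle w :
  feasible S (sync_seq s0 ++ map Send a) -> feasible S (sync_seq s0 ++ map Send b) ->
  shuffle a b w -> feasible S (sync_seq (s0 ++ w)).
Proof.
move=> feas_a feas_b sh; apply: feasible_sync_cat => j.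
have := shuffle_filter (fun m => src m == j) sh; rewrite proj_cat proj_map_Send.
case: (sent_by_side j) => silent; rewrite /sent_by in silent *; rewrite silent.
  by move/shuffle_sym/shuffle_nil_r => ->; move: (feas_b j); rewrite proj_cat proj_map_Send.
by move/shuffle_nil_r => ->; move: (feas_a j); rewrite proj_cat proj_map_Send.
Qed.

Lemma shuffle_same_state :
  (forall w, shuffle a b w -> feasible S (sync_seq (s0 ++ w))) ->
  exists f, forall j w, shuffle a b w -> lrun (init S j) (proj j (sync_seq (s0 ++ w))) (f j).
Proof.
move=> feas; suff /fin_all_exists [f runs] j : exists q : state S j,
    forall w, shuffle a b w -> lrun (init S j) (proj j (sync_seq (s0 ++ w))) q.
  by exists f.
case: (sent_by_side j) => silent.
  have [q r] := feas _ (shuffle_sym (shuffle_cat b a)) j.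
  by exists q => w sh; exact: (lrun_shuffle_sort disj silent feas sh r).
have [q r] := feas _ (shuffle_cat a b) j.
exists q => w /shuffle_sym sh.
apply: (lrun_shuffle_sort _ silent _ sh r) => [x y xb ya|w' /shuffle_sym].
  by rewrite eq_sym disj.
exact: feas.
Qed.

Lemma T1_reach_shuffle f xi :
  (forall j w, shuffle a b w -> lrun (init S j) (proj j (sync_seq (s0 ++ w))) (f j)) ->
  shuffle (sync_seq a) (sync_seq b) xi ->
  T S 1 (sync_seq s0 ++ xi) /\ reach (c0 S) (sync_seq s0 ++ xi) (stable_config f).
Proof.
move=> runs sh; apply: T1_reach_stable => [i k|j].
  have := shuffle_filter (act_on i k) sh; rewrite -!/(chan_word i k _) !chan_word_sync.
  rewrite chan_word_cat chan_word_sync !on_chan_sent_by.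
  case: (sent_by_side i) => ->; [move/shuffle_sym|]; move/shuffle_nil_r => ->;
    by rewrite -sync_seq_cat; eexists.
rewrite proj_cat -(proj_sync_peer_order j xi) -proj_cat -sync_seq_cat; apply: runs.
by have := shuffle_pmap (peer_step j) sh; rewrite -!/(peer_order j _) !peer_order_sync.
Qed.

End OneSynchronizable.

Theorem lemma4p9 (M : MsgSet) (S : system M) (a b : seq (msg M))
    (tau xi1 xi2 : seq (action M)) :
  one_synchronizable S ->
  T S 0 tau ->
  T S (size a) (tau ++ map Send a) ->
  T S (size b) (tau ++ map Send b) ->
  (forall x y, x \in a -> y \in b -> src x != src y) ->
  shuffle (sync_seq a) (sync_seq b) xi1 ->
  shuffle (sync_seq a) (sync_seq b) xi2 ->
  xi1 <> xi2 ->
  Tomega S (tau ++ xi1) /\ Tomega S (tau ++ xi2) /\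
  equivS S (tau ++ xi1) (tau ++ xi2).
Proof.
move=> sync1 [[s0 ->] _] [_ [ca reach_a]] [_ [cb reach_b]] disj sh1 sh2 _.
have feas w : shuffle a b w -> feasible S (sync_seq (s0 ++ w)).
  exact: (feasible_sync_shuffle sync1 disj (feasible_reach reach_a) (feasible_reach reach_b)).
have [f runs] := shuffle_same_state sync1 disj feas.
have [T1 R1] := T1_reach_shuffle disj runs sh1.
have [T2 R2] := T1_reach_shuffle disj runs sh2.
by do !split; [exists 1 | exists 1 | exists 1 | exists 1 | exists (stable_config f)].
Qed.
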